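(* Let $p$ be an odd prime and let $a$ be an integer with $a\not\equiv \pm 1 \pmod p$. Put $\epsilon=\left(\frac{a^2-1}{p}\right)$ and $\delta=\left(\frac{2(a+1)}{p}\right)$ (Legendre symbols; both lie in $\{\pm1\}$ under this hypothesis), and let $\omega_a=a+\sqrt{a^2-1}$. Then, in the ring $\mathbb{Z}[\sqrt{a^2-1}]$ (i.e. $\mathbb{Z}[X]/(X^2-(a^2-1))$) reduced modulo $p$, $$\omega_a^{\frac{p-\epsilon}{2}}\equiv \delta,\qquad \omega_a^{\frac{p+\epsilon}{2}}\equiv \delta\,\omega_a^{\epsilon}\pmod p,$$ equivalently $$T_{(p-\epsilon)/2}(a)\equiv\delta,\quad U_{(p-\epsilon)/2-1}(a)\equiv 0,\quad T_{(p+\epsilon)/2}(a)\equiv\delta a,\quad U_{(p+\epsilon)/2-1}(a)\equiv\delta\epsilon \pmod p.$$ Moreover $T_{(p-\epsilon)/2}(a)\equiv\delta \pmod{p^2}$, and $T_{(p-\epsilon)/2}(a)\equiv\delta \pmod p$ by itself implies $U_{(p-\epsilon)/2-1}(a)\equiv 0\pmod p$.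
   Context: The Chebyshev polynomials $T_n(x)$ (first kind) and $U_{n}(x)$ (second kind) are the integer polynomials determined by $(x+\sqrt{x^2-1})^n=T_n(x)+U_{n-1}(x)\sqrt{x^2-1}$ for $n\ge 0$ (so $T_0=1$, $U_{-1}=0$, $T_1=x$, $U_0=1$, and $T_n(\cos\theta)=\cos n\theta$). For an element $u+v\sqrt{a^2-1}$ with $u,v\in\mathbb{Z}$, congruence modulo $p$ means $u$ and $v$ are each congruent modulo $p$; $\omega_a^{-1}=a-\sqrt{a^2-1}$. *)

From mathcomp Require Import all_boot all_order all_algebra.
Set Implicit Arguments. Unset Strict Implicit. Unset Printing Implicit Defensive.
Import GRing.Theory Num.Theory.
Local Open Scope ring_scope.

(* Elements u + v*sqrt(d) of Z[sqrt d] represented as pairs (u, v) of integers. *)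
Definition qmul (d : int) (x y : int * int) : int * int :=
  (x.1 * y.1 + d * x.2 * y.2, x.1 * y.2 + x.2 * y.1).

Definition qpow (d : int) (x : int * int) (n : nat) : int * int :=
  iter n (qmul d x) (1, 0).

Definition omega (a : int) : int * int := (a, 1).
Definition omega_inv (a : int) : int * int := (a, -1).

(* (a + sqrt(a^2-1))^n = T_n(a) + U_{n-1}(a) sqrt(a^2-1) *)
Definition chebT (a : int) (n : nat) : int := (qpow (a ^+ 2 - 1) (omega a) n).1.
(* chebU a m = U_m(a), the sqrt-coefficient of omega_a^(m+1) *)
Definition chebU (a : int) (m : nat) : int := (qpow (a ^+ 2 - 1) (omega a) m.+1).2.

Definition qcong (p : int) (x y : int * int) : Prop :=
  (x.1 = y.1 %[mod p])%Z /\ (x.2 = y.2 %[mod p])%Z.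

Definition legendre (p : nat) (x : int) : int :=
  if (p%:Z %| x)%Z then 0
  else if [exists y : 'I_p, (p%:Z %| (nat_of_ord y)%:Z ^+ 2 - x)%Z] then 1 else -1.

(* Work in F_p[sqrt D], D = a^2 - 1, modelled by 2x2 matrices over F_p, and put
   g = (a + 1) + sqrt D, c = 2(a + 1).  Then g^2 = c * omega_a and g * conj(g) = c,
   while Frobenius and Euler's criterion D^((p-1)/2) = eps give
   g^p = (a + 1) + eps * sqrt D.  If eps = 1 then g^(p-1) = 1, so
   c^((p-1)/2) omega_a^((p-1)/2) = 1; if eps = -1 then g^(p+1) = conj(g) g = c, so
   c^((p+1)/2) omega_a^((p+1)/2) = c.  Either way omega_a^((p-eps)/2) is the inverse
   of c^((p-1)/2) = delta = +-1, i.e. delta itself.  The congruence modulo p^2 comes from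
   the norm equation T^2 - D U^2 = 1: with T = delta + O(p) and U = O(p), the
   factor T + delta of D U^2 = (T - delta)(T + delta) is prime to p. *)

From mathcomp Require Import all_boot all_order all_algebra.
From mathcomp Require Import cyclic finfield ring zify.
Import GRing.Theory Num.Theory.
Set Implicit Arguments. Unset Strict Implicit. Unset Printing Implicit Defensive.
Local Open Scope ring_scope.

Section PrimeField.

Variable p : nat.
Hypothesis p_pr : prime p.

Lemma Fp_int_eqP (x y : int) :
  reflect ((x = y %[mod p%:Z])%Z) ((x%:~R : 'F_p) == y%:~R).
Proof.
rewrite -subr_eq0 -rmorphB /= -(dvdz_pcharf (pchar_Fp p_pr)) -eqz_mod_dvd.
exact: eqP.
Qed.

Lemma Fp_expp (x : 'F_p) : x ^+ p = x.
Proof. by rewrite -{2}(expf_card x) card_Fp. Qed.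

Lemma Fp_expf_pred (x : 'F_p) : x != 0 -> x ^+ p.-1 = 1.
Proof.
move=> x_neq0; apply: (mulfI x_neq0).
by rewrite mulr1 -exprS prednK ?prime_gt0 ?Fp_expp.
Qed.

Lemma Fp_prim_root : exists g : 'F_p, (p.-1).-primitive_root g.
Proof.
pose units := enum (predC1 (0 : 'F_p)).
suff /hasP[g _ g_prim] : has (p.-1).-primitive_root units by exists g.
apply: has_prim_root.
- by rewrite -ltnS prednK ?prime_gt1 ?prime_gt0.
- by apply/allP => z; rewrite mem_enum unity_rootE => /Fp_expf_pred->.
- exact: enum_uniq.
- by rewrite -cardE cardC1 card_Fp.
Qed.

Hypothesis p_odd : odd p.

Lemma Fp_two_neq0 : (2 : 'F_p) != 0.
Proof.
rewrite -(dvdn_pcharf (pchar_Fp p_pr) 2) dvdn_prime2 //.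
by apply: contraTneq p_odd => ->.
Qed.

Lemma Fp_Euler (x : 'F_p) : x != 0 ->
  x ^+ p./2 = if [exists y, y ^+ 2 == x] then 1 else -1.
Proof.
move=> x_neq0; have p_pred : p.-1 = (p./2 * 2)%N.
  by rewrite -[in LHS](odd_double_half p) p_odd muln2.
case: existsP => [[y /eqP y_sqr]|not_sqr].
  rewrite -y_sqr -exprM mulnC -p_pred Fp_expf_pred //.
  by apply: contraNneq x_neq0 => y0; rewrite -y_sqr y0 expr0n.
have /orP[/eqP x_half|/eqP//] : (x ^+ p./2 == 1) || (x ^+ p./2 == -1).
  by rewrite -sqrf_eq1 -exprM -p_pred Fp_expf_pred.
have [g g_prim] := Fp_prim_root.
have [[i _] /= x_def] := prim_rootP g_prim (Fp_expf_pred x_neq0).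
exfalso; apply: not_sqr; exists (g ^+ i./2); rewrite -exprM.
(* x = g^i with g^(i n) = 1 forces p - 1 = 2n to divide i n, so i is even *)
have i_even : ~~ odd i.
  apply/negP => i_odd; move: x_half.
  rewrite x_def -exprM -(expr0 g) => /eqP; rewrite (eq_prim_root_expr g_prim) mod0n p_pred.
  rewrite -[i](odd_double_half) i_odd -muln2 mulnDl mul1n mulnAC -mulnA addnC modnMDl.
  have n_gt0 : (0 < p./2)%N by rewrite half_gt0 prime_gt1.
  by rewrite modn_small ?ltn_Pmulr // gtn_eqF.
by rewrite x_def muln2 -[X in _ == g ^+ X](odd_double_half i) (negPf i_even).
Qed.

Lemma legendre_Fp (z : int) : (legendre p z)%:~R = (z%:~R : 'F_p) ^+ p./2.
Proof.
have dvd_Fp := dvdz_pcharf (pchar_Fp p_pr).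
rewrite /legendre; case: ifPn => [|z_ndvd].
  by rewrite dvd_Fp => /eqP->; rewrite expr0n gtn_eqF ?half_gt0 ?prime_gt1.
rewrite Fp_Euler -?dvd_Fp //.
suff -> : [exists y : 'I_p, (p%:Z %| y%:Z ^+ 2 - z)%Z] =
          [exists y : 'F_p, y ^+ 2 == z%:~R] by case: ifP.
have sqr_Fp (y : nat) : (p%:Z %| y%:Z ^+ 2 - z)%Z = ((y%:R : 'F_p) ^+ 2 == z%:~R).
  by rewrite dvd_Fp rmorphB rmorphXn /= subr_eq0.
apply/existsP/existsP => [[y]|[y]]; first by rewrite sqr_Fp; exists y%:R.
have y_lt_p : (val y < p)%N by apply: leq_trans (ltn_ord y) _; rewrite Fp_cast.
by move=> y_sqr; exists (Ordinal y_lt_p); rewrite sqr_Fp /= natr_Zp.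
Qed.

End PrimeField.

Lemma legendre_pm1 (p : nat) (z : int) :
  ~~ (p%:Z %| z)%Z -> legendre p z = 1 \/ legendre p z = -1.
Proof. by rewrite /legendre => /negPf->; case: ifP; [left|right]. Qed.

Section QuadraticMatrix.

Variable R : comNzRingType.
Implicit Types d s u v : R.

(* The matrix of multiplication by u + v sqrt d on R[sqrt d] in the basis
   (1, sqrt d): these matrices form a commutative model of R[sqrt d]. *)
Definition qmx d u v : 'M[R]_2 :=
  \matrix_(i, j) if i == j then u else if i == ord0 then d * v else v.

Lemma qmx_mul d u v u' v' :
  qmx d u v * qmx d u' v' = qmx d (u * u' + d * v * v') (u * v' + v * u').
Proof.
apply/matrixP => i j; rewrite -mulmxE !mxE !big_ord_recr big_ord0 !mxE /=.
by case: i => [[|[|//]] ?]; case: j => [[|[|//]] ?] /=; ring.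
Qed.

Lemma qmx_add d u v u' v' : qmx d u v + qmx d u' v' = qmx d (u + u') (v + v').
Proof.
apply/matrixP => i j; rewrite !mxE.
by case: i => [[|[|//]] ?]; case: j => [[|[|//]] ?] /=; ring.
Qed.

Lemma qmx_scalar d s : qmx d s 0 = s%:M.
Proof.
apply/matrixP => i j; rewrite !mxE.
by case: i => [[|[|//]] ?]; case: j => [[|[|//]] ?] /=; rewrite ?mulr0.
Qed.

Lemma qmx_inj d u v u' v' : qmx d u v = qmx d u' v' -> u = u' /\ v = v'.
Proof.
by move/matrixP => eq_qmx; split; [move: (eq_qmx 0 0) | move: (eq_qmx 1 0)];
  rewrite !mxE.
Qed.

Lemma qmx_comm d u v u' v' : GRing.comm (qmx d u v) (qmx d u' v').
Proof. by rewrite /GRing.comm !qmx_mul; congr qmx; ring. Qed.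

Lemma scalar_mul_qmx d s u v : s%:M * qmx d u v = qmx d (s * u) (s * v).
Proof. by rewrite -(qmx_scalar d) qmx_mul; congr qmx; ring. Qed.

Lemma qmx_frob p d u v : p \in [pchar R] -> odd p ->
  qmx d u v ^+ p = qmx d (u ^+ p) (d ^+ p./2 * v ^+ p).
Proof.
move=> pchar_p p_odd; set n := p./2.
have pchar_mx : p \in [pchar 'M[R]_2].
  by rewrite inE (pcharf_prime pchar_p) -scaler_nat (pcharf0 pchar_p) scale0r eqxx.
have p_half : p = (2 * n).+1 by rewrite mul2n -[in LHS](odd_double_half p) p_odd.
have -> : qmx d u v = qmx d u 0 + qmx d 0 v by rewrite qmx_add add0r addr0.
rewrite -pFrobenius_autE pFrobenius_autD_comm ?pFrobenius_autE; last exact: qmx_comm.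
have sqr_sqrt : qmx d 0 v ^+ 2 = (d * v ^+ 2)%:M.
  by rewrite expr2 qmx_mul -(qmx_scalar d); congr qmx; ring.
rewrite qmx_scalar -rmorphXn /= {2}p_half exprS exprM sqr_sqrt -rmorphXn /=.
rewrite -!(qmx_scalar d) qmx_mul qmx_add; congr qmx; first ring.
have -> : v ^+ p = v * (v ^+ 2) ^+ n by rewrite p_half exprS exprM.
by rewrite exprMn; ring.
Qed.

Lemma qmx_mul_conj d u v : qmx d u v * qmx d u (-v) = (u ^+ 2 - d * v ^+ 2)%:M.
Proof. by rewrite qmx_mul -(qmx_scalar d); congr qmx; ring. Qed.

Lemma qmx_shift_sqr (a : R) :
  qmx (a ^+ 2 - 1) (a + 1) 1 ^+ 2 = (2 * (a + 1))%:M * qmx (a ^+ 2 - 1) a 1.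
Proof. by rewrite expr2 scalar_mul_qmx qmx_mul; congr qmx; ring. Qed.

End QuadraticMatrix.

Lemma eqmod_sqr_of_norm1 (p : nat) (T U d s : int) : prime p -> odd p ->
  T ^+ 2 - d * U ^+ 2 = 1 -> s ^+ 2 = 1 ->
  (T = s %[mod p%:Z])%Z -> (U = 0 %[mod p%:Z])%Z -> (T = s %[mod p%:Z ^+ 2])%Z.
Proof.
move=> p_pr p_odd norm1 s_sqr /eqP + /eqP; rewrite !eqz_mod_dvd subr0.
move=> p_dvd_Ts p_dvdU.
have p_ndvd_2s : ~~ (p%:Z %| 2 * s)%Z.
  apply/negP => /(dvdz_mulr s); rewrite -mulrA -expr2 s_sqr mulr1 dvdzE /=.
  by rewrite dvdn_prime2 // => /eqP p2; rewrite p2 in p_odd.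
have coprime_Ts : coprimez (p%:Z ^+ 2) (T + s).
  rewrite coprimezE abszX coprime_pexpl // prime_coprime //.
  apply: contra p_ndvd_2s => p_dvd_sum.
  rewrite (_ : 2 * s = (T + s) - (T - s)); last ring.
  by rewrite rpredB.
apply/eqP; rewrite eqz_mod_dvd -(Gauss_dvdzl _ coprime_Ts).
have -> : (T - s) * (T + s) = (T ^+ 2 - d * U ^+ 2) - s ^+ 2 + d * U ^+ 2 by ring.
by rewrite norm1 s_sqr subrr add0r dvdz_mull // dvdz_exp2r.
Qed.

Section HalfPowers.

Variables (p : nat) (alpha : 'F_p).
Hypotheses (p_pr : prime p) (p_odd : odd p) (alpha_neqN1 : alpha != -1).

Local Notation n := p./2.
Local Notation D := (alpha ^+ 2 - 1).
Local Notation c := (2 * (alpha + 1)).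
Local Notation W := (qmx D alpha 1).
Local Notation G := (qmx D (alpha + 1) 1).

Let c_neq0 : c != 0.
Proof. by rewrite mulf_neq0 ?Fp_two_neq0 // addr_eq0. Qed.

Let p_half : p = (2 * n).+1.
Proof. by rewrite mul2n -[in LHS](odd_double_half p) p_odd. Qed.

Let G_pow_double m : G ^+ (2 * m) = (c ^+ m)%:M * W ^+ m.
Proof.
rewrite exprM qmx_shift_sqr exprMn_comm -?rmorphXn //.
by rewrite /GRing.comm -(qmx_scalar D) qmx_comm.
Qed.

Let G_frob : G ^+ (2 * n).+1 = qmx D (alpha + 1) (D ^+ n).
Proof.
by rewrite -p_half qmx_frob ?pchar_Fp // !Fp_expp // mulr1.
Qed.

Let c_half_sqr : c ^+ n * c ^+ n = 1.
Proof.
have p_pred : p.-1 = (2 * n)%N by rewrite [in LHS]p_half.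
by rewrite -exprD addnn -mul2n -p_pred Fp_expf_pred.
Qed.

Let W_pow_of_scaled m :
  c%:M * ((c ^+ n)%:M * W ^+ m) = c%:M -> W ^+ m = (c ^+ n)%:M.
Proof.
have c_unit : (c%:M : 'M_2) \is a GRing.unit by rewrite rmorph_unit ?unitfE.
rewrite -[RHS]mulr1 => /(mulrI c_unit) W_inv.
have c_half_mx : (c ^+ n)%:M * (c ^+ n)%:M = 1 :> 'M_2.
  by rewrite -rmorphM c_half_sqr rmorph1.
by rewrite -[W ^+ m]mul1r -c_half_mx -mulrA W_inv mulr1.
Qed.

Let G_mul_conj : G * qmx D (alpha + 1) (-1) = c%:M.
Proof. by rewrite qmx_mul_conj; congr (_ %:M); ring. Qed.

Lemma qmx_half_pow_sqr : D ^+ n = 1 -> W ^+ n = (c ^+ n)%:M.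
Proof.
move=> D_half; apply: W_pow_of_scaled.
have := congr1 (fun M => qmx D (alpha + 1) (-1) * M) G_frob.
by rewrite /= D_half [G ^+ _]exprS mulrA qmx_comm G_mul_conj G_pow_double.
Qed.

Lemma qmx_half_pow_nonsqr : D ^+ n = -1 -> W ^+ n.+1 = (c ^+ n)%:M.
Proof.
move=> D_half; apply: W_pow_of_scaled.
have G_pow : G ^+ (2 * n.+1) = c%:M.
  by rewrite mulnS add2n exprSr G_frob D_half qmx_comm G_mul_conj.
by rewrite mulrA -rmorphM -exprS -G_pow_double.
Qed.

End HalfPowers.

Definition qmx_Fp (p : nat) (d : int) (x : int * int) : 'M['F_p]_2 :=
  qmx d%:~R x.1%:~R x.2%:~R.

Lemma qmx_Fp_mul p d x y : qmx_Fp p d (qmul d x y) = qmx_Fp p d x * qmx_Fp p d y.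
Proof. by rewrite /qmx_Fp qmx_mul /qmul /= !rmorphD !rmorphM. Qed.

Lemma qmx_Fp_pow p d x m : qmx_Fp p d (qpow d x m) = qmx_Fp p d x ^+ m.
Proof.
elim: m => [|m IHm]; first by rewrite /qmx_Fp /= qmx_scalar.
by rewrite /qpow iterS -/(qpow d x m) qmx_Fp_mul IHm exprS.
Qed.

Lemma qcongP p d x y : prime p -> qcong p%:Z x y <-> qmx_Fp p d x = qmx_Fp p d y.
Proof.
move=> p_pr; rewrite /qcong /qmx_Fp; split.
  by case=> /(Fp_int_eqP p_pr)/eqP-> /(Fp_int_eqP p_pr)/eqP->.
by case/qmx_inj => /eqP/(Fp_int_eqP p_pr) ? /eqP/(Fp_int_eqP p_pr).
Qed.

Lemma qpow_norm d x m :
  (qpow d x m).1 ^+ 2 - d * (qpow d x m).2 ^+ 2 = (x.1 ^+ 2 - d * x.2 ^+ 2) ^+ m.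
Proof.
elim: m => [|m IHm]; first by rewrite /= expr0; ring.
by rewrite /qpow iterS -/(qpow d x m) [in RHS]exprS -IHm /qmul /=; ring.
Qed.

Lemma half_sub_sign (p : nat) (e : int) : odd p -> e = 1 \/ e = -1 ->
  (absz (p%:Z - e)%R %/ 2)%N = (if e == 1 then p./2 else p./2.+1) /\
  (absz (p%:Z + e)%R %/ 2)%N = (if e == 1 then p./2.+1 else p./2).
Proof.
move=> p_odd; have p_eq : p = p./2.*2.+1 by rewrite -[in LHS](odd_double_half p) p_odd.
by case=> -> /=; split; lia.
Qed.

Section ChebyshevHalfIndex.

Variables (p : nat) (a : int).
Hypotheses (p_pr : prime p) (p_odd : odd p).
Hypotheses (a_not1 : ~ (a = 1 %[mod p%:Z])%Z) (a_notN1 : ~ (a = -1 %[mod p%:Z])%Z).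

Local Notation d := (a ^+ 2 - 1).
Local Notation eps := (legendre p (a ^+ 2 - 1)).
Local Notation delta := (legendre p (2 * (a + 1))).
Local Notation n1 := (absz (p%:Z - eps)%R %/ 2)%N.
Local Notation n2 := (absz (p%:Z + eps)%R %/ 2)%N.
Local Notation alpha := (a%:~R : 'F_p).

Let alpha_neqN1 : alpha != -1.
Proof.
by apply: contra_notN a_notN1 => /eqP alpha_eq; apply/(Fp_int_eqP p_pr); rewrite alpha_eq.
Qed.

Let alpha_neq1 : alpha != 1.
Proof.
by apply: contra_notN a_not1 => /eqP alpha_eq; apply/(Fp_int_eqP p_pr); rewrite alpha_eq.
Qed.

Let D_Fp : (d%:~R : 'F_p) = alpha ^+ 2 - 1.
Proof. by rewrite rmorphB rmorphXn. Qed.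

Let c_Fp : ((2 * (a + 1))%:~R : 'F_p) = 2 * (alpha + 1).
Proof. by rewrite intrM intrD. Qed.

Lemma legendre_sqr_sub1_pm1 : eps = 1 \/ eps = -1.
Proof.
apply: legendre_pm1; rewrite (dvdz_pcharf (pchar_Fp p_pr)) D_Fp.
by rewrite subr_eq0 sqrf_eq1 negb_or alpha_neq1.
Qed.

Lemma legendre_double_succ_pm1 : delta = 1 \/ delta = -1.
Proof.
apply: legendre_pm1; rewrite (dvdz_pcharf (pchar_Fp p_pr)) c_Fp.
by rewrite mulf_neq0 ?Fp_two_neq0 // addr_eq0.
Qed.

Lemma qpow_omega_half :
  qcong p%:Z (qpow d (omega a) n1) (delta, 0) /\
  qcong p%:Z (qpow d (omega a) n2)
    (qmul d (delta, 0) (if eps == 1 then omega a else omega_inv a)).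
Proof.
rewrite !(@qcongP p d) // qmx_Fp_mul !qmx_Fp_pow /qmx_Fp /= D_Fp qmx_scalar.
have eps_Fp : eps%:~R = (alpha ^+ 2 - 1) ^+ p./2 by rewrite legendre_Fp // D_Fp.
have delta_Fp : delta%:~R = (2 * (alpha + 1)) ^+ p./2 by rewrite legendre_Fp // c_Fp.
have [n1_eq n2_eq] := half_sub_sign p_odd legendre_sqr_sub1_pm1.
rewrite n1_eq n2_eq delta_Fp.
case: legendre_sqr_sub1_pm1 eps_Fp => -> /=; rewrite ?mulrN1z mulr1z => /esym D_half.
  have W_half := qmx_half_pow_sqr p_pr p_odd alpha_neqN1 D_half.
  by rewrite [_ ^+ p./2.+1]exprSr W_half.
have W_mul_conj : qmx (alpha ^+ 2 - 1) alpha 1 * qmx (alpha ^+ 2 - 1) alpha (-1) = 1.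
  by rewrite qmx_mul_conj; congr (_ %:M); ring.
have W_half := qmx_half_pow_nonsqr p_pr p_odd alpha_neqN1 D_half.
by rewrite -W_half [_ ^+ p./2.+1]exprSr -mulrA W_mul_conj mulr1.
Qed.

Lemma cheb_half_cong :
  [/\ (chebT a n1 = delta %[mod p%:Z])%Z, (chebU a n1.-1 = 0 %[mod p%:Z])%Z,
       (chebT a n2 = delta * a %[mod p%:Z])%Z &
       (chebU a n2.-1 = delta * eps %[mod p%:Z])%Z].
Proof.
have [[T1 U1] [T2 U2]] := qpow_omega_half.
have qmul_eq : qmul d (delta, 0) (if eps == 1 then omega a else omega_inv a) =
               (delta * a, delta * eps).
  by rewrite /qmul; case: legendre_sqr_sub1_pm1 => -> /=; congr pair; ring.
rewrite qmul_eq in T2 U2.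
have [n1_eq n2_eq] := half_sub_sign p_odd legendre_sqr_sub1_pm1.
have n_gt0 : (0 < p./2)%N by rewrite half_gt0 prime_gt1.
rewrite /chebU !prednK; first by split.
  by rewrite n2_eq; case: (eps == 1).
by rewrite n1_eq; case: (eps == 1).
Qed.

Lemma chebT_half_mod_sqr : (chebT a n1 = delta %[mod p%:Z ^+ 2])%Z.
Proof.
have [[T1 U1] _] := qpow_omega_half.
apply: (eqmod_sqr_of_norm1 (d := d) p_pr p_odd _ _ T1 U1).
  by rewrite qpow_norm /= [_ - _](_ : _ = 1) ?expr1n //; ring.
by case: legendre_double_succ_pm1 => ->.
Qed.

End ChebyshevHalfIndex.

Theorem theorem2p1 (p : nat) (a : int) :
  prime p -> odd p ->
  ~ (a = 1 %[mod p%:Z])%Z -> ~ (a = -1 %[mod p%:Z])%Z ->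
  let eps := legendre p (a ^+ 2 - 1) in
  let delta := legendre p (2 * (a + 1)) in
  let d := a ^+ 2 - 1 in
  let n1 := (absz (p%:Z - eps)%R %/ 2)%N in   (* (p - eps)/2 *)
  let n2 := (absz (p%:Z + eps)%R %/ 2)%N in   (* (p + eps)/2 *)
  (eps = 1 \/ eps = -1) /\ (delta = 1 \/ delta = -1) /\
  qcong p%:Z (qpow d (omega a) n1) (delta, 0) /\
  qcong p%:Z (qpow d (omega a) n2)
          (qmul d (delta, 0) (if eps == 1 then omega a else omega_inv a)) /\
  (chebT a n1 = delta %[mod p%:Z])%Z /\
  (chebU a n1.-1 = 0 %[mod p%:Z])%Z /\
  (chebT a n2 = delta * a %[mod p%:Z])%Z /\
  (chebU a n2.-1 = delta * eps %[mod p%:Z])%Z /\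
  (chebT a n1 = delta %[mod (p%:Z) ^+ 2])%Z /\
  ((chebT a n1 = delta %[mod p%:Z])%Z -> (chebU a n1.-1 = 0 %[mod p%:Z])%Z).
Proof.
move=> p_pr p_odd a_not1 a_notN1 eps delta d n1 n2.
have [pow_n1 pow_n2] := qpow_omega_half p_pr p_odd a_not1 a_notN1.
have [T_n1 U_n1 T_n2 U_n2] := cheb_half_cong p_pr p_odd a_not1 a_notN1.
split; first exact: legendre_sqr_sub1_pm1.
split; first exact: legendre_double_succ_pm1.
do 6 split=> //.
by split=> [|_ //]; apply: chebT_half_mod_sqr.
Qed.
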